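(* Let $M,M'\in\mathrm{Mat}(2,\mathbb{Z})$ have the same trace and determinant, and assume $\mathrm{mgcd}(M)=\mathrm{mgcd}(M')$. Then for every integer $n\ge2$, the reductions mod $n$ of $M$ and $M'$ are $\mathrm{Mat}(2,\mathbb{Z}_n)^\times$-conjugate.
   Context: For $M=\begin{pmatrix}a&b\\c&d\end{pmatrix}$, $\mathrm{mgcd}(M)=\gcd(b,c,d-a)\ge0$, equal to $0$ iff $b=c=d-a=0$. $\mathrm{Mat}(2,\mathbb{Z}_n)^\times$ is the group of invertible $2\times2$ matrices over $\mathbb{Z}_n=\mathbb{Z}/n\mathbb{Z}$. *)

From mathcomp Require Import all_boot all_order all_algebra.
Set Implicit Arguments. Unset Strict Implicit. Unset Printing Implicit Defensive.
Import GRing.Theory Num.Theory.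
Local Open Scope ring_scope.

(* mgcd(M) = gcd(b, c, d - a) for M = [[a, b], [c, d]] (nonnegative; 0 iff scalar). *)
Definition mgcd (M : 'M[int]_2) : int :=
  gcdz (gcdz (M 0 1) (M 1 0)) (M 1 1 - M 0 0).

(* Reduction mod n of an integer matrix, as a matrix over 'Z_n (use only for 1 < n). *)
Definition red_mod (n : nat) (M : 'M[int]_2) : 'M['Z_n]_2 :=
  map_mx (fun z : int => z%:~R) M.

Definition mx_conj (R : comUnitRingType) (A B : 'M[R]_2) : Prop :=
  exists2 P : 'M[R]_2, P \in unitmx & B = P *m A *m invmx P.

From mathcomp Require Import all_boot all_order all_algebra.
From mathcomp Require Import ring zify.
Import GRing.Theory.
Set Implicit Arguments. Unset Strict Implicit.
Local Open Scope ring_scope.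

(* Write M = a + g N with g = mgcd M, so that mgcd N = 1.  The binary quadratic
   form v |-> det [v | N v] is then primitive, hence takes a value prime to n, and
   in the basis v, N v of (Z/n)^2 the matrix N acts by its companion matrix.  So M
   is conjugate mod n to a + g C(N), which only depends on a, g, tr N and det N.
   Equal traces give 2 (a' - a) = g (tr N - tr N'), and equal discriminants
   g^2 (tr N^2 - 4 det N) make tr N - tr N' even, so g divides a' - a: M' is also
   of the form a + g N', with N' of the same trace and determinant as N. *)

Definition mx2 (R : Type) (a b c d : R) : 'M[R]_2 :=
  \matrix_(i, j) if i == 0 then (if j == 0 then a else b)
                 else (if j == 0 then c else d).

Lemma mx2E (R : Type) (a b c d : R) :
  [/\ mx2 a b c d 0 0 = a, mx2 a b c d 0 1 = b,
      mx2 a b c d 1 0 = c & mx2 a b c d 1 1 = d].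
Proof. by rewrite !mxE. Qed.

Lemma mx2_eta (R : Type) (A : 'M[R]_2) : A = mx2 (A 0 0) (A 0 1) (A 1 0) (A 1 1).
Proof.
apply/matrixP => i j; rewrite mxE.
by case: i => [[|[|//]] ?]; case: j => [[|[|//]] ?] /=; congr (A _ _); apply: val_inj.
Qed.

Lemma mulmx2 (R : pzSemiRingType) (A B : 'M[R]_2) :
  A *m B = mx2 (A 0 0 * B 0 0 + A 0 1 * B 1 0) (A 0 0 * B 0 1 + A 0 1 * B 1 1)
               (A 1 0 * B 0 0 + A 1 1 * B 1 0) (A 1 0 * B 0 1 + A 1 1 * B 1 1).
Proof.
rewrite [LHS]mx2_eta !mxE !big_ord_recl !big_ord0 !addr0.
by have -> : lift ord0 ord0 = 1 :> 'I_2 by apply: val_inj.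
Qed.

Lemma det_mx2 (R : comPzRingType) (A : 'M[R]_2) : \det A = A 0 0 * A 1 1 - A 0 1 * A 1 0.
Proof.
rewrite (expand_det_row _ 0) !big_ord_recl big_ord0 /cofactor !det_mx11 !mxE /=.
rewrite addr0 expr0 expr1 mul1r mulN1r mulrN.
by congr (_ * _ - _ * _); congr (A _ _); apply/val_inj.
Qed.

Lemma tr_mx2 (R : pzSemiRingType) (A : 'M[R]_2) : \tr A = A 0 0 + A 1 1.
Proof.
rewrite /mxtrace !big_ord_recl big_ord0 addr0.
by congr (A _ _ + A _ _); apply/val_inj.
Qed.

Section ScalarShift.
Variables (R : comPzRingType) (a g : R) (N : 'M[R]_2).

Lemma tr_scalar_add_scale : \tr (a%:M + g *: N) = a *+ 2 + g * \tr N.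
Proof. by rewrite mxtraceD mxtrace_scalar mxtraceZ. Qed.

Lemma det_scalar_add_scale :
  \det (a%:M + g *: N) = a ^+ 2 + a * g * \tr N + g ^+ 2 * \det N.
Proof. rewrite !det_mx2 tr_mx2 !mxE /=; ring. Qed.

Lemma mulmx_scalar_add_scale (P B : 'M[R]_2) :
  N *m P = P *m B -> (a%:M + g *: N) *m P = P *m (a%:M + g *: B).
Proof.
move=> NPE.
by rewrite mulmxDl mulmxDr mul_scalar_mx mul_mx_scalar -scalemxAl -scalemxAr NPE.
Qed.

End ScalarShift.

Definition companion2 (R : comPzRingType) (N : 'M[R]_2) : 'M[R]_2 :=
  mx2 0 (- \det N) 1 (\tr N).

(* The matrix with columns v and N v, for v = (x, y). *)
Definition cyclic_basis2 (R : pzSemiRingType) (N : 'M[R]_2) (x y : R) : 'M[R]_2 :=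
  mx2 x (N 0 0 * x + N 0 1 * y) y (N 1 0 * x + N 1 1 * y).

Section Companion.
Variables (R : comPzRingType) (N : 'M[R]_2) (x y : R).

Lemma mulmx_cyclic_basis2 :
  N *m cyclic_basis2 N x y = cyclic_basis2 N x y *m companion2 N.
Proof.
rewrite !mulmx2 /cyclic_basis2 /companion2 det_mx2 tr_mx2.
have [-> -> -> ->] := mx2E x (N 0 0 * x + N 0 1 * y) y (N 1 0 * x + N 1 1 * y).
by rewrite !mxE /=; congr mx2; ring.
Qed.

Lemma det_cyclic_basis2 : \det (cyclic_basis2 N x y) =
  N 1 0 * x * x + (N 1 1 - N 0 0) * x * y + (- N 0 1) * y * y.
Proof. by rewrite det_mx2 !mxE /=; ring. Qed.

End Companion.

Section Conjugacy.
Variable R : comUnitRingType.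
Implicit Types A B C P : 'M[R]_2.

Lemma mx_conjP A B :
  mx_conj A B <-> exists2 P, P \in unitmx & A *m P = P *m B.
Proof.
split=> [[P uP ->] | [P uP APE]].
  by exists (invmx P); rewrite ?unitmx_inv // !mulmxA mulVmx ?mul1mx.
exists (invmx P); first by rewrite unitmx_inv.
by rewrite invmxK -mulmxA APE mulKmx.
Qed.

Lemma mx_conj_refl A : mx_conj A A.
Proof. by apply/mx_conjP; exists 1%:M; rewrite ?unitmx1 ?mul1mx ?mulmx1. Qed.

Lemma mx_conj_sym A B : mx_conj A B -> mx_conj B A.
Proof.
move/mx_conjP=> [P uP APE]; apply/mx_conjP; exists (invmx P); first by rewrite unitmx_inv.
by rewrite -{1}[B](mulKmx uP) -APE -!mulmxA mulmxV ?mulmx1.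
Qed.

Lemma mx_conj_trans A B C : mx_conj A B -> mx_conj B C -> mx_conj A C.
Proof.
move/mx_conjP=> [P uP APE] /mx_conjP[Q uQ BQE]; apply/mx_conjP.
by exists (P *m Q); rewrite ?unitmx_mul ?uP // mulmxA APE -!mulmxA BQE.
Qed.

End Conjugacy.

Lemma Euclidz_dvdM (p : nat) (u v : int) : prime p ->
  (p%:Z %| u * v)%Z = (p%:Z %| u)%Z || (p%:Z %| v)%Z.
Proof. by move=> pp; rewrite !dvdzE abszM Euclid_dvdM. Qed.

Lemma dvdz2_sub_sqr (x y : int) : (2 %| x ^+ 2 - y ^+ 2)%Z = (2 %| x - y)%Z.
Proof.
have -> : x ^+ 2 - y ^+ 2 = (x - y) * ((x - y) + 2 * y) by ring.
by rewrite (@Euclidz_dvdM 2) // (rpredDr _ (dvdz_mulr y (dvdzz 2))) orbb.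
Qed.

Lemma coprime_prime_dvd m n : (0 < m)%N ->
  (forall p, prime p -> (p %| m)%N -> ~~ (p %| n)%N) -> coprime m n.
Proof.
move=> m0 primeP; rewrite /coprime; apply: contraT => g1.
have g_gt1 : (1 < gcdn m n)%N.
  by move: (gcdn_gt0 m n) g1; rewrite m0; case: gcdn => [|[|]].
have [p pp pg] := pdivP g_gt1.
by have := primeP p pp (dvdn_trans pg (dvdn_gcdl _ _)); rewrite (dvdn_trans pg (dvdn_gcdr _ _)).
Qed.

Lemma prime_dvd_part p n (pi : nat_pred) : prime p -> (0 < n)%N -> (p %| n)%N ->
  (p %| n`_pi)%N = (p \in pi).
Proof.
move=> pp n0 pn; have := pi_of_part pi n0 p.
by rewrite !inE /= !mem_primes pp n0 pn part_gt0.
Qed.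

Section PrimitiveForm.
Variables A B C : int.

Lemma primitive_form_prime_ndvd (p : nat) (x y : int) : prime p ->
  ~~ [&& p%:Z %| A, p%:Z %| B & p%:Z %| C]%Z ->
  (p%:Z %| x)%Z = (p%:Z %| A)%Z && ~~ (p%:Z %| C)%Z ->
  (p%:Z %| y)%Z = ~~ (p%:Z %| A)%Z ->
  ~~ (p%:Z %| A * x * x + B * x * y + C * y * y)%Z.
Proof.
move=> pp ABC px py.
have dvdM3 u v w : (p%:Z %| u)%Z -> (p%:Z %| u * v * w)%Z by move=> pu; rewrite !dvdz_mulr.
case pA: (p%:Z %| A)%Z in ABC px py; last first.
  have py' : (p%:Z %| y)%Z by rewrite py.
  have BCy : (p%:Z %| B * x * y + C * y * y)%Z by rewrite rpredD ?dvdz_mull.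
  by rewrite -addrA (rpredDr _ BCy) !Euclidz_dvdM // pA px.
case pC: (p%:Z %| C)%Z in ABC px.
  rewrite (rpredDr _ (dvdM3 _ _ _ pC)) (rpredDl _ (dvdM3 _ _ _ pA)).
  by rewrite !Euclidz_dvdM // px py !orbF; move: ABC; rewrite /= andbT.
have px' : (p%:Z %| x)%Z by rewrite px.
have Bxy : (p%:Z %| B * x * y)%Z by rewrite mulrAC dvdz_mull.
by rewrite (rpredDl _ (rpredD (dvdM3 _ _ _ pA) Bxy)) !Euclidz_dvdM // pC py.
Qed.

Lemma primitive_form_coprime n : (0 < n)%N ->
  (forall p, prime p -> ~~ [&& p%:Z %| A, p%:Z %| B & p%:Z %| C]%Z) ->
  exists x y : int, coprime n `|A * x * x + B * x * y + C * y * y|.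
Proof.
move=> n0 ABC.
(* For each prime p | n exactly one of the three terms is nonzero mod p. *)
pose pA : nat_pred := [pred p : nat | (p%:Z %| A)%Z].
pose pC : nat_pred := [pred p : nat | (p%:Z %| C)%Z].
exists (n`_[predI pA & [predC pC]])%:Z, (n`_[predC pA])%:Z.
apply: (coprime_prime_dvd n0) => p pp pn.
by apply: primitive_form_prime_ndvd; rewrite ?ABC // dvdzE /= prime_dvd_part ?inE.
Qed.

End PrimitiveForm.

Lemma red_modM n (A B : 'M[int]_2) : red_mod n (A *m B) = red_mod n A *m red_mod n B.
Proof. exact: (map_mxM (intr : {rmorphism int -> 'Z_n})). Qed.

Lemma det_red_mod n (A : 'M[int]_2) : \det (red_mod n A) = (\det A)%:~R.
Proof. exact: (det_map_mx (intr : {rmorphism int -> 'Z_n})). Qed.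

Lemma unitZp_int n (z : int) : (1 < n)%N -> coprime n `|z| -> (z%:~R : 'Z_n) \is a GRing.unit.
Proof.
move=> n1; case: z => m /= cop; first by rewrite -[m%:~R]/(m%:R) unitZpE.
by rewrite NegzE mulrNz unitrN -[_%:~R]/(m.+1%:R) unitZpE.
Qed.

Lemma mx_conj_red_companion2 n (a g : int) (N : 'M[int]_2) : (1 < n)%N -> mgcd N = 1 ->
  mx_conj (red_mod n (a%:M + g *: N)) (red_mod n (a%:M + g *: companion2 N)).
Proof.
move=> n1 N1.
case: (@primitive_form_coprime (N 1 0) (N 1 1 - N 0 0) (- N 0 1) n (ltnW n1))
    => [p pp | x [y]]; first apply/and3P => -[p10 pd p01].
  have : (p%:Z %| mgcd N)%Z by rewrite !dvdz_gcd p10 pd -(rpredN _ (N 0 1)) p01.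
  by rewrite N1 dvdz1 /= => /eqP p1; rewrite p1 in pp.
rewrite -det_cyclic_basis2 => cop.
apply/mx_conjP; exists (red_mod n (cyclic_basis2 N x y)).
  by rewrite unitmxE det_red_mod unitZp_int.
by rewrite -!red_modM (mulmx_scalar_add_scale _ _ (mulmx_cyclic_basis2 N x y)).
Qed.

Lemma mgcd_scalar_add_scale (a g : int) (N : 'M[int]_2) :
  mgcd (a%:M + g *: N) = `|g|%:Z * mgcd N.
Proof.
rewrite /mgcd; have -> : (a%:M + g *: N) 1 1 - (a%:M + g *: N) 0 0 = g * (N 1 1 - N 0 0).
  by rewrite !mxE /=; ring.
by rewrite !mxE /= !add0r /gcdz /= !abszM -!muln_gcdr PoszM.
Qed.

Lemma mgcd_scalar_decomposition (M : 'M[int]_2) (a : int) :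
  (mgcd M %| (M 0 0 - a)%R)%Z -> exists N, M = a%:M + mgcd M *: N.
Proof.
rewrite /mgcd; set e := M 1 1 - M 0 0; set g := gcdz _ e => /dvdzP[k0 dk0].
have /dvdzP[k1 db] := dvdz_trans (dvdz_gcdl _ e) (dvdz_gcdl (M 0 1) (M 1 0)).
have /dvdzP[k2 dc] := dvdz_trans (dvdz_gcdl _ e) (dvdz_gcdr (M 0 1) (M 1 0)).
have /dvdzP[k3 de] := dvdz_gcdr (gcdz (M 0 1) (M 1 0)) e.
rewrite -/g in db dc de.
have e00 : M 0 0 = a + g * k0 by rewrite mulrC -dk0; ring.
have e11 : M 1 1 = a + g * (k0 + k3).
  by rewrite mulrDr mulrC -dk0 [g * _]mulrC -de /e; ring.
exists (mx2 k0 k1 k2 (k0 + k3)).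
by rewrite [LHS]mx2_eta [RHS]mx2_eta e00 e11 db dc !mxE /=; congr mx2; ring.
Qed.

Lemma mgcd_primitive_part (M N : 'M[int]_2) (a : int) :
  mgcd M != 0 -> M = a%:M + mgcd M *: N -> mgcd N = 1.
Proof.
move=> g0 /(congr1 mgcd); rewrite mgcd_scalar_add_scale /mgcd /= => gE.
by apply: (mulfI g0); rewrite mulr1 -gE.
Qed.

Lemma mgcd_dvd_diag_sub (M M' : 'M[int]_2) :
  \tr M = \tr M' -> \det M = \det M' -> mgcd M = mgcd M' ->
  (mgcd M %| (M' 0 0 - M 0 0)%R)%Z.
Proof.
move=> trE detE gE.
have [N eM] : exists N, M = (M 0 0)%:M + mgcd M *: N.
  by apply: mgcd_scalar_decomposition; rewrite subrr dvdz0.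
have [N' eM'] : exists N', M' = (M' 0 0)%:M + mgcd M' *: N'.
  by apply: mgcd_scalar_decomposition; rewrite subrr dvdz0.
rewrite -gE in eM'; set g := mgcd M in eM eM' *.
set a := M 0 0 in eM *; set a' := M' 0 0 in eM' *.
move: trE detE; rewrite eM eM' !tr_scalar_add_scale !det_scalar_add_scale.
set t := \tr N; set t' := \tr N'; set d := \det N; set d' := \det N' => trE detE.
have diagE : (a' - a) *+ 2 = g * (t - t') by lia.
have [g0 | g_neq0] := eqVneq g 0; first by rewrite g0 dvd0z; apply/eqP; lia.
have discE : t ^+ 2 - 4 * d = t' ^+ 2 - 4 * d'.
  apply: (mulfI (expf_neq0 2 g_neq0)).
  transitivity ((a *+ 2 + g * t) ^+ 2 - 4 * (a ^+ 2 + a * g * t + g ^+ 2 * d)); first by ring.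
  by rewrite trE detE; ring.
have /dvdzP[k tE] : (2 %| t - t')%Z.
  by rewrite -dvdz2_sub_sqr (_ : _ - _ = 2 * (2 * (d - d'))) ?dvdz_mulr //; lia.
by apply/dvdzP; exists k; rewrite tE in diagE; nia.
Qed.

Theorem proposition39 (M M' : 'M[int]_2) :
  \tr M = \tr M' -> \det M = \det M' -> mgcd M = mgcd M' ->
  forall n : nat, (1 < n)%N -> mx_conj (red_mod n M) (red_mod n M').
Proof.
move=> trE detE gE n n1.
have [N eM] : exists N, M = (M 0 0)%:M + mgcd M *: N.
  by apply: mgcd_scalar_decomposition; rewrite subrr dvdz0.
have [N' eM'] : exists N', M' = (M 0 0)%:M + mgcd M' *: N'.
  by apply: mgcd_scalar_decomposition; rewrite -gE mgcd_dvd_diag_sub.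
have [g0 | g_neq0] := eqVneq (mgcd M) 0.
  by rewrite eM eM' -gE g0 !scale0r; apply: mx_conj_refl.
have N1 := mgcd_primitive_part g_neq0 eM.
have N'1 : mgcd N' = 1 by apply: mgcd_primitive_part eM'; rewrite -gE.
rewrite -gE in eM'; set a := M 0 0 in eM eM'; set g := mgcd M in eM eM' g_neq0.
have [trN detN] : \tr N = \tr N' /\ \det N = \det N'.
  move: trE detE; rewrite eM eM' !tr_scalar_add_scale !det_scalar_add_scale => trE detE.
  have trN : \tr N = \tr N' by apply: (mulfI g_neq0); apply: (addrI (a *+ 2)).
  split=> //; apply: (mulfI (expf_neq0 2 g_neq0)).
  by apply: (addrI (a ^+ 2 + a * g * \tr N)); rewrite {2}trN.
rewrite eM eM'; apply: mx_conj_trans (mx_conj_red_companion2 a g n1 N1) _.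
by rewrite /companion2 trN detN; apply: mx_conj_sym; apply: mx_conj_red_companion2.
Qed.
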